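(* Let $0<\delta<\frac12$, let $f\in\mathrm{Diff}_+^{1,\delta}(I)$, and let $G\subseteq\mathrm{Diff}_0^3(I)$ satisfy condition (a): there exists $c>0$ such that for all $g_1\ne g_2$ in $G$, $\sup_{t\in[0,1]}|\log(g_1'(t))-\log(g_2'(t))|\ge c$. Then for every $C>0$ the set $\{g\in G: p_\delta(g\circ f)\le C\}$ is finite.
   Context: $I=[0,1]$. $\mathrm{Diff}_+^1(I)$ is the set of $C^1$ diffeomorphisms of $I$ fixing $0$ and $1$; $\mathrm{Diff}_+^{1,\delta}(I)$ is the set of $f\in\mathrm{Diff}_+^1(I)$ with $f'$ Hölder of exponent $\delta$. $\mathrm{Diff}_0^3(I)$ is the set of $C^3$ diffeomorphisms $f$ of $I$ fixing $0$ and $1$ with $f'(0)=f'(1)=1$. For $f\in\mathrm{Diff}_+^{1,\delta}(I)$, $p_\delta(f)=|\log(f'(0))|+\sup_{t_1\ne t_2\in I}\frac{|\log(f'(t_2))-\log(f'(t_1))|}{|t_2-t_1|^\delta}$. *)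

From Stdlib Require Import Reals ClassicalEpsilon List.
From Coquelicot Require Import Coquelicot.
Open Scope R_scope.

Definition inI (t : R) : Prop := 0 <= t <= 1.

Definition has_derI (f : R -> R) (t l : R) : Prop :=
  forall eps : R, 0 < eps -> exists delta : R, 0 < delta /\
    forall s : R, inI s -> s <> t -> Rabs (s - t) < delta ->
      Rabs ((f s - f t) / (s - t) - l) < eps.

(* the derivative within I (the value is unique when it exists, since I has no
   isolated points); arbitrary where it does not exist *)
Definition derI (f : R -> R) (t : R) : R :=
  epsilon (inhabits 0) (fun l => has_derI f t l).

Definition differentiableI (f : R -> R) : Prop :=
  forall t, inI t -> exists l, has_derI f t l.

Definition continuousI (f : R -> R) : Prop :=
  forall t, inI t -> forall eps : R, 0 < eps -> exists delta : R, 0 < delta /\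
    forall s : R, inI s -> Rabs (s - t) < delta -> Rabs (f s - f t) < eps.

(* Diff^1_+(I): C^1 diffeomorphisms of I fixing 0 and 1 (orientation preserving:
   f' > 0 on I, which together with f 0 = 0, f 1 = 1 makes f a C^1 diffeo of I) *)
Definition Diff1 (f : R -> R) : Prop :=
  f 0 = 0 /\ f 1 = 1 /\ differentiableI f /\ continuousI (derI f) /\
  (forall t, inI t -> 0 < derI f t).

Definition Diff1delta (delta : R) (f : R -> R) : Prop :=
  Diff1 f /\ exists K : R, forall t1 t2, inI t1 -> inI t2 -> t1 <> t2 ->
    Rabs (derI f t2 - derI f t1) <= K * Rpower (Rabs (t2 - t1)) delta.

Definition Diff3_0 (f : R -> R) : Prop :=
  Diff1 f /\ differentiableI (derI f) /\ differentiableI (derI (derI f)) /\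
  continuousI (derI (derI (derI f))) /\
  derI f 0 = 1 /\ derI f 1 = 1.

Definition p_delta (delta : R) (f : R -> R) : Rbar :=
  Rbar_plus (Finite (Rabs (ln (derI f 0))))
    (Lub_Rbar (fun x => exists t1 t2, inI t1 /\ inI t2 /\ t1 <> t2 /\
       x = Rabs (ln (derI f t2) - ln (derI f t1)) / Rpower (Rabs (t2 - t1)) delta)).

Definition condition_a (G : (R -> R) -> Prop) : Prop :=
  exists c : R, 0 < c /\ forall g1 g2, G g1 -> G g2 -> g1 <> g2 ->
    Rbar_le (Finite c)
      (Lub_Rbar (fun x => exists t, inI t /\
         x = Rabs (ln (derI g1 t) - ln (derI g2 t)))).

Definition finite_set {T : Type} (A : T -> Prop) : Prop :=
  exists l : list T, forall x, A x -> In x l.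

From Stdlib Require Import Reals ClassicalEpsilon Classical_Prop List Lra Lia.
From Coquelicot Require Import Coquelicot.
Open Scope R_scope.

(* For g in the set, put phi_g := ln g' o f.  By the chain rule
   ln (g o f)' = phi_g + ln f', and ln f' is delta-Hölder because f' is
   delta-Hölder and bounded below by a positive constant; hence the phi_g are
   uniformly delta-Hölder, and they vanish at 0 because g'(0) = 1 and
   f 0 = 0.  So they are uniformly bounded and equicontinuous.  Since f maps I
   onto I, condition (a) keeps two distinct phi_g at sup-distance at least c/2.
   An equicontinuous, uniformly bounded and uniformly separated family on I is
   finite: sampling on a fine grid and rounding the values to a coarse mesh
   gives a code that is injective on the family and takes finitely many
   values. *)

(** * Derivatives within I *)

Lemma has_derI_unique h t l1 l2 : inI t -> has_derI h t l1 -> has_derI h t l2 -> l1 = l2.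
Proof.
  intros [Ht0 Ht1] H1 H2.
  destruct (Req_dec l1 l2) as [|Hne]; [assumption|exfalso].
  assert (He : 0 < Rabs (l1 - l2) / 2)
    by (assert (0 < Rabs (l1 - l2)) by (apply Rabs_pos_lt; lra); lra).
  destruct (H1 _ He) as [d1 [Hd1 P1]]. destruct (H2 _ He) as [d2 [Hd2 P2]].
  set (d := Rmin (Rmin d1 d2) 1 / 2).
  assert (Hd : 0 < d /\ d < d1 /\ d < d2 /\ d <= 1/2).
  { unfold d. pose proof (Rmin_l (Rmin d1 d2) 1). pose proof (Rmin_r (Rmin d1 d2) 1).
    pose proof (Rmin_l d1 d2). pose proof (Rmin_r d1 d2).
    assert (0 < Rmin (Rmin d1 d2) 1) by (repeat apply Rmin_glb_lt; lra). lra. }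
  set (s := if Rle_dec t (1/2) then t + d else t - d).
  assert (Hs : inI s /\ s <> t /\ Rabs (s - t) = d).
  { unfold s; destruct (Rle_dec t (1/2)); repeat split; try lra.
    - replace (t + d - t) with d by ring. apply Rabs_pos_eq; lra.
    - replace (t - d - t) with (- d) by ring. rewrite Rabs_Ropp. apply Rabs_pos_eq; lra. }
  destruct Hs as [HsI [Hst Hsd]].
  specialize (P1 s HsI Hst ltac:(lra)). specialize (P2 s HsI Hst ltac:(lra)).
  set (q := (h s - h t) / (s - t)) in *.
  pose proof (Rabs_triang (- (q - l1)) (q - l2)) as Tr.
  rewrite Rabs_Ropp in Tr. replace (- (q - l1) + (q - l2)) with (l1 - l2) in Tr by ring.
  lra.
Qed.

Lemma derI_eq h t l : inI t -> has_derI h t l -> derI h t = l.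
Proof.
  intros Ht H. apply (has_derI_unique h t); [exact Ht| |exact H].
  apply (epsilon_spec (inhabits 0) (fun l => has_derI h t l)). eauto.
Qed.

Lemma has_derI_derI h t : differentiableI h -> inI t -> has_derI h t (derI h t).
Proof.
  intros D Ht. destruct (D t Ht) as [l Hl]. rewrite (derI_eq h t l); assumption.
Qed.

Lemma has_derI_local_lipschitz h t l : has_derI h t l ->
  exists d, 0 < d /\ forall s, inI s -> Rabs (s - t) < d ->
    Rabs (h s - h t) <= (Rabs l + 1) * Rabs (s - t).
Proof.
  intros H. destruct (H 1 Rlt_0_1) as [d [Hd P]]. exists d; split; [exact Hd|].
  intros s Hs Hsd. destruct (Req_dec s t) as [->|Hne].
  - rewrite !Rminus_diag, Rabs_R0. lra.
  - specialize (P s Hs Hne Hsd).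
    replace (h s - h t) with (((h s - h t) / (s - t)) * (s - t)) by (field; lra).
    rewrite Rabs_mult. apply Rmult_le_compat_r; [apply Rabs_pos|].
    set (q := (h s - h t) / (s - t)) in *.
    pose proof (Rabs_triang (q - l) l). replace (q - l + l) with q in H0 by ring. lra.
Qed.

Lemma differentiableI_continuousI h : differentiableI h -> continuousI h.
Proof.
  intros D t Ht eps Heps. destruct (D t Ht) as [l Hl].
  destruct (has_derI_local_lipschitz h t l Hl) as [d [Hd P]].
  assert (Hl1 : 0 < Rabs l + 1) by (pose proof (Rabs_pos l); lra).
  set (r := eps / (Rabs l + 1)).
  assert (Hr : 0 < r /\ (Rabs l + 1) * r = eps) by (unfold r; split; [apply Rdiv_lt_0_compat|field]; lra).
  exists (Rmin d r). split; [apply Rmin_glb_lt; lra|].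
  intros s Hs Hsd. pose proof (Rmin_l d r). pose proof (Rmin_r d r).
  eapply Rle_lt_trans; [apply P; [exact Hs|lra]|].
  rewrite <- (proj2 Hr). apply Rmult_lt_compat_l; lra.
Qed.

Lemma small_factor eps M : 0 < eps -> 0 <= M -> exists e, 0 < e /\ e <= 1 /\ M * e < eps / 2.
Proof.
  intros He HM. exists (Rmin 1 (eps / (2 * (M + 1)))).
  pose proof (Rmin_l 1 (eps / (2 * (M + 1)))). pose proof (Rmin_r 1 (eps / (2 * (M + 1)))).
  assert (0 < eps / (2 * (M + 1))) by (apply Rdiv_lt_0_compat; lra).
  split; [apply Rmin_glb_lt; lra|]. split; [assumption|].
  apply Rle_lt_trans with (M * (eps / (2 * (M + 1)))); [apply Rmult_le_compat_l; assumption|].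
  apply (Rmult_lt_reg_l (2 * (M + 1))); [lra|].
  replace (2 * (M + 1) * (M * (eps / (2 * (M + 1))))) with (M * eps) by (field; lra). nra.
Qed.

Lemma has_derI_comp g f t a b : inI t -> (forall s, inI s -> inI (f s)) ->
  has_derI g (f t) a -> has_derI f t b -> has_derI (fun s => g (f s)) t (a * b).
Proof.
  intros Ht Hf Hg Hfd eps Heps.
  set (A := Rabs a). set (Bb := Rabs b).
  assert (HA : 0 <= A) by apply Rabs_pos. assert (HB : 0 <= Bb) by apply Rabs_pos.
  destruct (small_factor eps A Heps HA) as [e1 He1].
  destruct (small_factor eps (Bb + 1) Heps ltac:(lra)) as [e2 He2].
  destruct (Hfd e1 ltac:(lra)) as [df [Hdf Pf]].
  destruct (Hg e2 ltac:(lra)) as [dg [Hdg Pg]].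
  destruct (has_derI_local_lipschitz f t b Hfd) as [dc [Hdc Pc]].
  set (d := Rmin (Rmin df dc) (dg / (Bb + 1))).
  assert (Hd : 0 < d /\ d <= df /\ d <= dc /\ d * (Bb + 1) <= dg).
  { unfold d. pose proof (Rmin_l (Rmin df dc) (dg / (Bb + 1))).
    pose proof (Rmin_r (Rmin df dc) (dg / (Bb + 1))).
    pose proof (Rmin_l df dc). pose proof (Rmin_r df dc).
    assert (0 < dg / (Bb + 1)) by (apply Rdiv_lt_0_compat; lra).
    split; [repeat apply Rmin_glb_lt; lra|]. split; [lra|]. split; [lra|].
    apply Rle_trans with (dg / (Bb + 1) * (Bb + 1)); [apply Rmult_le_compat_r; lra|].
    right; field; lra. }
  exists d. split; [lra|].
  intros s Hs Hst Hsd.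
  specialize (Pf s Hs Hst ltac:(lra)).
  set (qf := (f s - f t) / (s - t)) in *.
  destruct (Req_dec (f s) (f t)) as [Efs|Nfs].
  - assert (Hqf : qf = 0) by (unfold qf; rewrite Efs; field; lra).
    replace ((g (f s) - g (f t)) / (s - t) - a * b) with (- (a * b)) by (rewrite Efs; field; lra).
    rewrite Hqf, Rminus_0_l, Rabs_Ropp in Pf. fold Bb in Pf.
    rewrite Rabs_Ropp, Rabs_mult. fold A Bb.
    assert (A * Bb <= A * e1) by (apply Rmult_le_compat_l; lra). lra.
  - assert (Hqf : Rabs qf <= Bb + 1).
    { pose proof (Rabs_triang (qf - b) b). replace (qf - b + b) with qf in H by ring.
      unfold Bb. lra. }
    assert (Hfs : Rabs (f s - f t) < dg).
    { eapply Rle_lt_trans; [apply Pc; [exact Hs|lra]|].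
      assert (Rabs (s - t) * (Bb + 1) < d * (Bb + 1)) by (apply Rmult_lt_compat_r; lra).
      fold Bb. lra. }
    specialize (Pg (f s) (Hf s Hs) Nfs Hfs).
    set (qg := (g (f s) - g (f t)) / (f s - f t)) in *.
    replace ((g (f s) - g (f t)) / (s - t) - a * b) with ((qg - a) * qf + a * (qf - b))
      by (unfold qg, qf; field; split; lra).
    eapply Rle_lt_trans; [apply Rabs_triang|]. rewrite !Rabs_mult. fold A.
    assert (Rabs (qg - a) * Rabs qf <= e2 * (Bb + 1))
      by (apply Rmult_le_compat; try apply Rabs_pos; lra).
    assert (A * Rabs (qf - b) <= A * e1) by (apply Rmult_le_compat_l; lra).
    lra.
Qed.

Lemma derI_comp g f t : inI t -> (forall s, inI s -> inI (f s)) ->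
  differentiableI g -> differentiableI f ->
  derI (fun s => g (f s)) t = derI g (f t) * derI f t.
Proof.
  intros Ht Hf Dg Df. apply derI_eq; [exact Ht|].
  apply has_derI_comp; [exact Ht|exact Hf| |]; apply has_derI_derI; auto.
Qed.

(** * Elements of Diff^1_+(I) *)

(* Extending a function on I to R by h o clamp lets us use Stdlib's extreme and
   intermediate value theorems, which are stated for functions continuous on R. *)
Definition clamp (x : R) : R := Rmax 0 (Rmin 1 x).

Lemma clamp_inI x : inI (clamp x).
Proof. unfold clamp, inI. split; [apply Rmax_l|]. apply Rmax_lub; [lra|apply Rmin_l]. Qed.

Lemma clamp_id x : inI x -> clamp x = x.
Proof. intros [H0 H1]. unfold clamp. rewrite Rmin_right by lra. rewrite Rmax_right; lra. Qed.

Lemma clamp_contraction x y : Rabs (clamp x - clamp y) <= Rabs (x - y).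
Proof.
  unfold clamp, Rmax, Rmin.
  repeat destruct Rle_dec; unfold Rabs; repeat destruct Rcase_abs; lra.
Qed.

Lemma continuity_clamp h : continuousI h -> continuity (fun x => h (clamp x)).
Proof.
  intros Hc x eps Heps. destruct (Hc (clamp x) (clamp_inI x) eps Heps) as [d [Hd P]].
  exists d. split; [exact Hd|]. intros y [_ Hy]. simpl in *. unfold R_dist in *.
  apply P; [apply clamp_inI|]. eapply Rle_lt_trans; [apply clamp_contraction|exact Hy].
Qed.

Lemma exists_larger_of_pos_derI h t b : inI t -> t < 1 -> has_derI h t b -> 0 < b ->
  exists s, inI s /\ h t < h s.
Proof.
  intros [H0 H1] Ht1 Hd Hb. destruct (Hd (b/2) ltac:(lra)) as [d [Hdp P]].
  set (r := Rmin (d/2) ((1 - t)/2)).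
  pose proof (Rmin_l (d/2) ((1 - t)/2)). pose proof (Rmin_r (d/2) ((1 - t)/2)).
  assert (0 < r) by (apply Rmin_glb_lt; lra).
  assert (HsI : inI (t + r)) by (unfold inI, r in *; lra).
  exists (t + r); split; [exact HsI|].
  specialize (P (t + r) HsI ltac:(lra) ltac:(rewrite Rabs_pos_eq; unfold r in *; lra)).
  apply Rabs_lt_between in P. replace (t + r - t) with r in P by ring.
  assert (0 < (h (t + r) - h t) / r) by lra.
  assert (h (t + r) - h t = (h (t + r) - h t) / r * r) by (field; lra).
  assert (0 < (h (t + r) - h t) / r * r) by nra. lra.
Qed.

Lemma exists_smaller_of_pos_derI h t b : inI t -> 0 < t -> has_derI h t b -> 0 < b ->
  exists s, inI s /\ h s < h t.
Proof.
  intros [H0 H1] Ht0 Hd Hb. destruct (Hd (b/2) ltac:(lra)) as [d [Hdp P]].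
  set (r := Rmin (d/2) (t/2)).
  pose proof (Rmin_l (d/2) (t/2)). pose proof (Rmin_r (d/2) (t/2)).
  assert (0 < r) by (apply Rmin_glb_lt; lra).
  assert (HsI : inI (t - r)) by (unfold inI, r in *; lra).
  exists (t - r); split; [exact HsI|].
  specialize (P (t - r) HsI ltac:(lra) ltac:(rewrite Rabs_left; unfold r in *; lra)).
  apply Rabs_lt_between in P. replace (t - r - t) with (- r) in P by ring.
  assert (0 < (h (t - r) - h t) / - r) by lra.
  assert (h (t - r) - h t = - ((h (t - r) - h t) / - r * r)) by (field; lra).
  assert (0 < (h (t - r) - h t) / - r * r) by nra. lra.
Qed.

(* The maximum of f on I is attained at 1 and the minimum at 0, because at any
   other point the positive derivative produces a larger (smaller) value. *)
Lemma Diff1_maps_I f : Diff1 f -> forall t, inI t -> inI (f t).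
Proof.
  intros [F0 [F1 [FD [_ FP]]]].
  pose proof (continuity_clamp f (differentiableI_continuousI f FD)) as Cf.
  assert (Hc : forall c, 0 <= c <= 1 -> continuity_pt (fun x => f (clamp x)) c)
    by (intros; apply Cf).
  destruct (continuity_ab_maj _ 0 1 ltac:(lra) Hc) as [M [HM HMI]].
  destruct (continuity_ab_min _ 0 1 ltac:(lra) Hc) as [m [Hm HmI]].
  rewrite clamp_id in HM, Hm by assumption.
  assert (EM : M = 1).
  { destruct (Req_dec M 1) as [|Hne]; [assumption|exfalso].
    destruct (exists_larger_of_pos_derI f M _ HMI ltac:(destruct HMI; lra)
                (has_derI_derI f M FD HMI) (FP M HMI)) as [s [Hs Hlt]].
    specialize (HM s Hs). rewrite clamp_id in HM by assumption. lra. }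
  assert (Em : m = 0).
  { destruct (Req_dec m 0) as [|Hne]; [assumption|exfalso].
    destruct (exists_smaller_of_pos_derI f m _ HmI ltac:(destruct HmI; lra)
                (has_derI_derI f m FD HmI) (FP m HmI)) as [s [Hs Hlt]].
    specialize (Hm s Hs). rewrite clamp_id in Hm by assumption. lra. }
  subst M m. intros t Ht. specialize (HM t Ht). specialize (Hm t Ht).
  rewrite clamp_id in HM, Hm by assumption. unfold inI; lra.
Qed.

Lemma Diff1_onto_I f : Diff1 f -> forall u, inI u -> exists t, inI t /\ f t = u.
Proof.
  intros [F0 [F1 [FD _]]] u [Hu0 Hu1].
  pose proof (continuity_clamp f (differentiableI_continuousI f FD)) as Cf.
  assert (C2 : continuity (fun x => f (clamp x) - u))
    by (apply continuity_minus; [exact Cf|apply continuity_const; intros ? ?; reflexivity]).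
  assert (HI0 : inI 0) by (unfold inI; lra). assert (HI1 : inI 1) by (unfold inI; lra).
  destruct (IVT_cor _ 0 1 C2 ltac:(lra)) as [z [Hz Ez]].
  - rewrite !clamp_id, F0, F1 by assumption. nra.
  - exists z. rewrite clamp_id in Ez by exact Hz. split; [exact Hz|lra].
Qed.

Lemma Diff1_derI_lower_bound f : Diff1 f -> exists m, 0 < m /\ forall t, inI t -> m <= derI f t.
Proof.
  intros [_ [_ [_ [FC FP]]]].
  assert (Hc : forall c, 0 <= c <= 1 -> continuity_pt (fun x => derI f (clamp x)) c)
    by (intros; apply continuity_clamp, FC).
  destruct (continuity_ab_min _ 0 1 ltac:(lra) Hc) as [t0 [Hm Ht0]].
  exists (derI f (clamp t0)). split; [apply FP, clamp_inI|].
  intros t Ht. specialize (Hm t Ht). rewrite (clamp_id t Ht) in Hm. exact Hm.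
Qed.

(** * Hölder estimates *)

Lemma Rabs_ln_sub_le m x y : 0 < m -> m <= x -> m <= y -> Rabs (ln x - ln y) <= Rabs (x - y) / m.
Proof.
  intros Hm.
  (* ln u - ln v = ln (u/v) <= u/v - 1 *)
  assert (K : forall u v, m <= v -> v <= u -> ln u - ln v <= (u - v) / m).
  { intros u v Hv Huv. rewrite <- ln_div by lra.
    pose proof (exp_ineq1_le (ln (u / v))) as E.
    rewrite exp_ln in E by (apply Rdiv_lt_0_compat; lra).
    apply Rle_trans with ((u - v) / v); [replace ((u - v) / v) with (u / v - 1) by (field; lra); lra|].
    unfold Rdiv. apply Rmult_le_compat_l; [lra|]. apply Rinv_le_contravar; lra. }
  intros Hx Hy. destruct (Rle_dec y x) as [Hyx|Hxy].
  - assert (ln y <= ln x) by (apply ln_le; lra).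
    rewrite !Rabs_pos_eq by lra. apply K; lra.
  - assert (ln x <= ln y) by (apply ln_le; lra).
    rewrite Rabs_minus_sym, (Rabs_minus_sym x y), !Rabs_pos_eq by lra. apply K; lra.
Qed.

Lemma p_delta_le_holder delta h C : Rbar_le (p_delta delta h) (Finite C) ->
  forall t1 t2, inI t1 -> inI t2 -> t1 <> t2 ->
  Rabs (ln (derI h t2) - ln (derI h t1)) <= C * Rpower (Rabs (t2 - t1)) delta.
Proof.
  intros H t1 t2 H1 H2 H12. unfold p_delta in H.
  destruct (Lub_Rbar_correct (fun x => exists t1 t2, inI t1 /\ inI t2 /\ t1 <> t2 /\
       x = Rabs (ln (derI h t2) - ln (derI h t1)) / Rpower (Rabs (t2 - t1)) delta)) as [ub _].
  set (S := Lub_Rbar _) in *.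
  set (w := Rpower (Rabs (t2 - t1)) delta).
  assert (Hw : 0 < w) by (unfold w, Rpower; apply exp_pos).
  set (x := Rabs (ln (derI h t2) - ln (derI h t1)) / w).
  assert (Hx : Rbar_le x S) by (apply ub; exists t1, t2; auto).
  assert (Hq : x <= C).
  { pose proof (Rabs_pos (ln (derI h 0))). destruct S as [r| |]; simpl in *; [lra|tauto|tauto]. }
  unfold x in Hq. apply (Rmult_le_compat_r w) in Hq; [|lra].
  unfold Rdiv in Hq. rewrite Rmult_assoc, Rinv_l, Rmult_1_r in Hq by lra. exact Hq.
Qed.

Lemma holder_ln_derI f delta K m : 0 < m -> (forall t, inI t -> m <= derI f t) ->
  (forall t1 t2, inI t1 -> inI t2 -> t1 <> t2 ->
     Rabs (derI f t2 - derI f t1) <= K * Rpower (Rabs (t2 - t1)) delta) ->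
  forall t1 t2, inI t1 -> inI t2 -> t1 <> t2 ->
  Rabs (ln (derI f t2) - ln (derI f t1)) <= Rabs K / m * Rpower (Rabs (t2 - t1)) delta.
Proof.
  intros Hm Hmf HK t1 t2 H1 H2 H12.
  eapply Rle_trans; [apply (Rabs_ln_sub_le m); auto|].
  unfold Rdiv. rewrite (Rmult_comm (Rabs K)), Rmult_assoc, (Rmult_comm (/ m)).
  apply Rmult_le_compat_r; [left; apply Rinv_0_lt_compat; exact Hm|].
  eapply Rle_trans; [apply HK; assumption|].
  apply Rmult_le_compat_r; [unfold Rpower; left; apply exp_pos|apply RRle_abs].
Qed.

(* By the chain rule, ln (g o f)' = ln g' o f + ln f'. *)
Lemma holder_ln_derI_outer delta f K m g C : Diff1 f -> 0 < m ->
  (forall t, inI t -> m <= derI f t) ->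
  (forall t1 t2, inI t1 -> inI t2 -> t1 <> t2 ->
     Rabs (derI f t2 - derI f t1) <= K * Rpower (Rabs (t2 - t1)) delta) ->
  Diff1 g -> Rbar_le (p_delta delta (fun t => g (f t))) (Finite C) ->
  forall t1 t2, inI t1 -> inI t2 -> t1 <> t2 ->
  Rabs (ln (derI g (f t2)) - ln (derI g (f t1)))
    <= (C + Rabs K / m) * Rpower (Rabs (t2 - t1)) delta.
Proof.
  intros Df Hm Hmf HK [_ [_ [GD [_ GP]]]] Hp t1 t2 H1 H2 H12.
  pose proof (Diff1_maps_I f Df) as Fm. pose proof Df as [_ [_ [FD [_ FP]]]].
  assert (LE : forall t, inI t ->
    ln (derI (fun s => g (f s)) t) = ln (derI g (f t)) + ln (derI f t)).
  { intros t Ht. rewrite derI_comp by assumption. apply ln_mult; auto. }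
  pose proof (p_delta_le_holder delta _ C Hp t1 t2 H1 H2 H12) as Pgf.
  pose proof (holder_ln_derI f delta K m Hm Hmf HK t1 t2 H1 H2 H12) as Pf.
  rewrite !LE in Pgf by assumption.
  pose proof (Rabs_triang (ln (derI g (f t2)) + ln (derI f t2) - (ln (derI g (f t1)) + ln (derI f t1)))
                (- (ln (derI f t2) - ln (derI f t1)))) as Tr.
  rewrite Rabs_Ropp in Tr.
  replace (ln (derI g (f t2)) + ln (derI f t2) - (ln (derI g (f t1)) + ln (derI f t1))
           + - (ln (derI f t2) - ln (derI f t1)))
    with (ln (derI g (f t2)) - ln (derI g (f t1))) in Tr by ring.
  lra.
Qed.

Lemma holder_uniform_continuity (h : R -> R) L delta eps : 0 < L -> 0 < delta -> 0 < eps ->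
  (forall t1 t2, inI t1 -> inI t2 -> t1 <> t2 -> Rabs (h t2 - h t1) <= L * Rpower (Rabs (t2 - t1)) delta) ->
  forall t1 t2, inI t1 -> inI t2 -> Rabs (t2 - t1) < Rpower (eps / L) (1 / delta) ->
  Rabs (h t2 - h t1) <= eps.
Proof.
  intros HL Hd He Hh t1 t2 H1 H2 Ht.
  destruct (Req_dec t1 t2) as [<-|Hne]; [rewrite !Rminus_diag, Rabs_R0; lra|].
  eapply Rle_trans; [apply Hh; assumption|].
  assert (HeL : 0 < eps / L) by (apply Rdiv_lt_0_compat; lra).
  apply Rle_trans with (L * (eps / L)); [|right; field; lra].
  apply Rmult_le_compat_l; [lra|].
  replace (eps / L) with (Rpower (Rpower (eps / L) (1 / delta)) delta)
    by (rewrite Rpower_mult; replace (1 / delta * delta) with 1 by (field; lra); apply Rpower_1; lra).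
  apply Rle_Rpower_l; [lra|]. split; [apply Rabs_pos_lt; lra|lra].
Qed.

Lemma holder_bound (h : R -> R) L delta : 0 <= L -> 0 <= delta -> h 0 = 0 ->
  (forall t1 t2, inI t1 -> inI t2 -> t1 <> t2 -> Rabs (h t2 - h t1) <= L * Rpower (Rabs (t2 - t1)) delta) ->
  forall t, inI t -> Rabs (h t) <= L.
Proof.
  intros HL Hd H0 Hh t Ht.
  destruct (Req_dec t 0) as [->|Hne]; [rewrite H0, Rabs_R0; exact HL|].
  assert (HI0 : inI 0) by (unfold inI; lra).
  pose proof (Hh 0 t HI0 Ht (not_eq_sym Hne)) as H. rewrite H0, !Rminus_0_r in H.
  eapply Rle_trans; [exact H|].
  rewrite <- (Rmult_1_r L) at 2. apply Rmult_le_compat_l; [exact HL|].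
  assert (E : Rpower 1 delta = 1) by (unfold Rpower; rewrite ln_1, Rmult_0_r; apply exp_0).
  rewrite <- E. destruct Ht. apply Rle_Rpower_l; [exact Hd|]. split; [apply Rabs_pos_lt|rewrite Rabs_pos_eq]; lra.
Qed.

(** * Separated equicontinuous families are finite *)

Lemma Lub_Rbar_gt_exists (E : R -> Prop) a b : Rbar_le (Finite a) (Lub_Rbar E) -> b < a ->
  exists x, E x /\ b < x.
Proof.
  intros Ha Hb. apply NNPP. intros Hno.
  assert (Ub : Rbar_le (Lub_Rbar E) (Finite b)).
  { apply (proj2 (Lub_Rbar_correct E)). intros x Ex. simpl.
    apply Rnot_lt_le. intros Hx. apply Hno. exists x; auto. }
  pose proof (Rbar_le_trans _ _ _ Ha Ub) as H. simpl in H. lra.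
Qed.

Lemma finite_set_of_code {T A : Type} (S : T -> Prop) (code : T -> A) (L : list A) :
  (forall x, S x -> In (code x) L) ->
  (forall x y, S x -> S y -> code x = code y -> x = y) ->
  finite_set S.
Proof.
  intros HL Hinj.
  destruct (classic (exists x, S x)) as [[x0 _]|Hno]; [|exists nil; intros x Sx; apply Hno; eauto].
  exists (map (fun c => epsilon (inhabits x0) (fun x => S x /\ code x = c)) L).
  intros x Sx. apply in_map_iff. exists (code x). split; [|auto].
  assert (H : exists y, S y /\ code y = code x) by eauto.
  destruct (epsilon_spec (inhabits x0) (fun y => S y /\ code y = code x) H) as [H1 H2].
  apply Hinj; auto.
Qed.

Fixpoint lists_over {A : Type} (Rg : list A) (n : nat) : list (list A) :=
  match n with
  | O => nil :: nil
  | S n => flat_map (fun z => map (cons z) (lists_over Rg n)) Rg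
  end.

Lemma In_lists_over {A : Type} (Rg : list A) n l : length l = n -> (forall z, In z l -> In z Rg) ->
  In l (lists_over Rg n).
Proof.
  revert l. induction n as [|n IH]; intros l Hl Hz.
  - destruct l; simpl in *; [auto|discriminate].
  - destruct l as [|z l]; simpl in *; [discriminate|].
    apply in_flat_map. exists z. split; [apply Hz; auto|].
    apply in_map, IH; [lia|]. intros; apply Hz; auto.
Qed.

Definition Zinterval (M : Z) : list Z :=
  map (fun i => (Z.of_nat i - M)%Z) (seq 0 (Z.to_nat (2 * M + 1))).

Lemma In_Zinterval M z : (- M <= z <= M)%Z -> In z (Zinterval M).
Proof.
  intros H. apply in_map_iff. exists (Z.to_nat (z + M)). split; [lia|]. apply in_seq. lia.
Qed.

Lemma up_div_eq_close eps x y : 0 < eps -> up (x / eps) = up (y / eps) -> Rabs (x - y) < eps.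
Proof.
  intros He E. destruct (archimed (x / eps)) as [a b]. destruct (archimed (y / eps)) as [c d].
  rewrite E in a, b.
  assert (Rabs (x / eps - y / eps) < 1) by (apply Rabs_def1; lra).
  replace (x - y) with (eps * (x / eps - y / eps)) by (field; lra).
  rewrite Rabs_mult, (Rabs_pos_eq eps) by lra. nra.
Qed.

Lemma up_div_in_Zinterval eps B x : 0 < eps -> Rabs x <= B ->
  In (up (x / eps)) (Zinterval (up (B / eps) + 1)).
Proof.
  intros He Hx. apply In_Zinterval.
  destruct (archimed (x / eps)) as [a b]. destruct (archimed (B / eps)) as [c _].
  assert (Hq : Rabs (x / eps) <= B / eps).
  { unfold Rdiv. rewrite Rabs_mult, Rabs_inv, (Rabs_pos_eq eps) by lra.
    apply Rmult_le_compat_r; [left; apply Rinv_0_lt_compat|]; lra. }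
  apply Rabs_le_between in Hq.
  split.
  - assert (IZR (- up (B / eps) - 1) < IZR (up (x / eps))) by (rewrite minus_IZR, opp_IZR; lra).
    apply lt_IZR in H. lia.
  - assert (IZR (up (x / eps)) < IZR (up (B / eps) + 2)) by (rewrite plus_IZR; lra).
    apply lt_IZR in H. lia.
Qed.

Lemma inI_grid N k : (0 < N)%nat -> (k <= N)%nat -> inI (INR k / INR N).
Proof.
  intros HN Hk. apply lt_0_INR in HN. apply le_INR in Hk. pose proof (pos_INR k).
  split; [apply Rdiv_le_0_compat; lra|].
  apply (Rmult_le_reg_l (INR N)); [lra|]. field_simplify; lra.
Qed.

Lemma grid_approximation eta : 0 < eta -> exists N : nat, (0 < N)%nat /\
  forall t, inI t -> exists k, (k <= N)%nat /\ Rabs (t - INR k / INR N) < eta.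
Proof.
  intros Heta. destruct (archimed (1 / eta)) as [HN1 _].
  assert (Hpos : 0 < 1 / eta) by (apply Rdiv_lt_0_compat; lra).
  set (zN := up (1 / eta)) in *.
  assert (HzN : (0 < zN)%Z) by (apply lt_IZR; lra).
  exists (Z.to_nat zN).
  assert (HINR : INR (Z.to_nat zN) = IZR zN)
    by (rewrite INR_IZR_INZ, Znat.Z2Nat.id; [reflexivity|lia]).
  split; [lia|]. rewrite HINR. intros t [Ht0 Ht1].
  assert (HNeta : 1 / IZR zN < eta).
  { apply (Rmult_lt_reg_l (IZR zN)); [lra|].
    replace (IZR zN * (1 / IZR zN)) with 1 by (field; lra).
    apply (Rmult_lt_reg_l (/ eta)); [apply Rinv_0_lt_compat; lra|].
    replace (/ eta * (IZR zN * eta)) with (IZR zN) by (field; lra). lra. }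
  (* k = up (t N) - 1 is the grid index just below t N *)
  destruct (archimed (t * IZR zN)) as [Hz1 Hz2].
  set (z := up (t * IZR zN)) in *.
  assert (Hz0 : (0 < z)%Z) by (apply lt_IZR; nra).
  assert (Hzk : (z - 1 <= zN)%Z) by (apply le_IZR; rewrite minus_IZR; nra).
  exists (Z.to_nat (z - 1)). split; [lia|].
  rewrite INR_IZR_INZ, Znat.Z2Nat.id, minus_IZR by lia.
  apply Rle_lt_trans with (1 / IZR zN); [|exact HNeta].
  apply Rabs_le. split; apply (Rmult_le_reg_l (IZR zN)); try lra; field_simplify; lra.
Qed.

(* The code of g is the sequence of rounded values of phi g on a grid of mesh
   < eta; rounding to the mesh eps makes codes of 3 eps-separated members differ. *)
Lemma finite_of_separated_equicontinuous {T : Type} (P : T -> Prop) (phi : T -> R -> R)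
    (eps B eta : R) : 0 < eps -> 0 < eta ->
  (forall g, P g -> forall t s, inI t -> inI s -> Rabs (s - t) < eta ->
     Rabs (phi g s - phi g t) <= eps) ->
  (forall g, P g -> forall t, inI t -> Rabs (phi g t) <= B) ->
  (forall g1 g2, P g1 -> P g2 -> g1 <> g2 -> exists t, inI t /\ 3 * eps < Rabs (phi g1 t - phi g2 t)) ->
  finite_set P.
Proof.
  intros Heps Heta Heq Hb Hsep.
  destruct (grid_approximation eta Heta) as [N [HN Hgrid]].
  set (code := fun g => map (fun k => up (phi g (INR k / INR N) / eps)) (seq 0 (S N))).
  apply (finite_set_of_code P code (lists_over (Zinterval (up (B / eps) + 1)) (S N))).
  - intros g Pg. apply In_lists_over; [unfold code; rewrite length_map, length_seq; reflexivity|].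
    intros z Hz. apply in_map_iff in Hz as [k [<- Hk]]. apply in_seq in Hk.
    apply up_div_in_Zinterval; [exact Heps|]. apply Hb, inI_grid; [exact Pg|lia|lia].
  - intros x y Px Py E. apply NNPP. intros Hne.
    destruct (Hsep x y Px Py Hne) as [t [Ht Hgt]].
    destruct (Hgrid t Ht) as [k [HkN Htp]].
    set (p := INR k / INR N) in *.
    assert (Hp : inI p) by (apply inI_grid; assumption).
    assert (Hxy : Rabs (phi x p - phi y p) < eps).
    { apply up_div_eq_close; [exact Heps|].
      apply (proj1 map_ext_in_iff E). apply in_seq. lia. }
    pose proof (Heq x Px p t Hp Ht Htp) as Ex. pose proof (Heq y Py p t Hp Ht Htp) as Ey.
    rewrite Rabs_minus_sym in Ey.
    pose proof (Rabs_triang (phi x t - phi x p) (phi x p - phi y p)) as T1.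
    pose proof (Rabs_triang (phi x t - phi x p + (phi x p - phi y p)) (phi y p - phi y t)) as T2.
    replace (phi x t - phi x p + (phi x p - phi y p) + (phi y p - phi y t))
      with (phi x t - phi y t) in T2 by ring.
    replace (phi x t - phi x p + (phi x p - phi y p)) with (phi x t - phi y p) in T1, T2 by ring.
    lra.
Qed.

Theorem mainTheorem15 (delta : R) (f : R -> R) (G : (R -> R) -> Prop) :
  0 < delta < 1/2 ->
  Diff1delta delta f ->
  (forall g, G g -> Diff3_0 g) ->
  condition_a G ->
  forall C : R, 0 < C ->
    finite_set (fun g => G g /\ Rbar_le (p_delta delta (fun t => g (f t))) (Finite C)).
Proof.
  intros Hd [Df [K HK]] HG [c [Hc Hsep]] C HC.
  destruct (Diff1_derI_lower_bound f Df) as [m [Hm Hmf]].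
  set (L := C + Rabs K / m).
  assert (HL : 0 < L) by (unfold L; pose proof (Rabs_pos K);
    assert (0 <= Rabs K / m) by (apply Rdiv_le_0_compat; lra); lra).
  assert (Hhol : forall g, G g /\ Rbar_le (p_delta delta (fun t => g (f t))) (Finite C) ->
    forall t1 t2, inI t1 -> inI t2 -> t1 <> t2 ->
    Rabs (ln (derI g (f t2)) - ln (derI g (f t1))) <= L * Rpower (Rabs (t2 - t1)) delta).
  { intros g [Gg Hp]. destruct (HG g Gg) as [Dg _].
    exact (holder_ln_derI_outer delta f K m g C Df Hm Hmf HK Dg Hp). }
  apply (finite_of_separated_equicontinuous _ (fun g t => ln (derI g (f t)))
           (c / 6) L (Rpower (c / 6 / L) (1 / delta))); [lra|unfold Rpower; apply exp_pos| | |].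
  - intros g Pg. apply (holder_uniform_continuity _ L delta); [lra|lra|lra|exact (Hhol g Pg)].
  - intros g Pg. apply (holder_bound _ L delta); [lra|lra| |exact (Hhol g Pg)].
    destruct Pg as [Gg _]. destruct (HG g Gg) as [_ [_ [_ [_ [E _]]]]].
    destruct Df as [F0 _]. rewrite F0, E. apply ln_1.
  - intros g1 g2 [G1 _] [G2 _] Hne.
    destruct (Lub_Rbar_gt_exists _ c (c / 2) (Hsep g1 g2 G1 G2 Hne) ltac:(lra)) as [x [[u [Hu ->]] Hlt]].
    destruct (Diff1_onto_I f Df u Hu) as [t [Ht <-]]. exists t. split; [exact Ht|lra].
Qed.
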